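(* Let $d\ge 2$. There are a constant $C>0$ and $n_0(d)$ depending only on $d$ such that for all $n\ge n_0(d)$: if $\mathcal{F}$, $B_i$ are as in the context, $J\subseteq[n]$ with $|J|\le n/4$, and $K\ge 0$ is a real number with $|E(\mathcal{G}_J)|\ge\binom{n-|J|}{d}-Kn$, then $|\mathcal{T}_J^1|\le CK$.
   Context: Let $\mathcal{F}=\{F_1,\dots,F_m\}\subseteq\binom{[n]}{d+1}$ consist of distinct sets and have VC-dimension at most $d$ (no $(d+1)$-set $S$ is shattered, i.e. no $S$ such that every $A\subseteq S$ equals $F\cap S$ for some $F\in\mathcal{F}$). For $i\in[m]$, call $B\subsetneq F_i$ admissible for $F_i$ if $F\cap F_i\neq B$ for every $F\in\mathcal{F}$. For each $i$, $B_i$ is a fixed admissible set for $F_i$ of maximum cardinality among all admissible sets. For $J\subseteq[n]$, $\mathcal{G}_J$ is the $d$-uniform hypergraph on vertex set $[n]\setminus J$ with edge set $E(\mathcal{G}_J):=\{F_k\setminus J: k\in[m],\ |F_k\cap J|=1\}$. $\mathcal{T}_J^1$ is the set of $F_k\in\mathcal{F}$ with $F_k\subseteq[n]\setminus J$, $B_k\subseteq[n]\setminus J$ and $|B_k|=d-1$. *)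

From mathcomp Require Import all_boot.
From Stdlib Require Import Reals.
Set Implicit Arguments. Unset Strict Implicit. Unset Printing Implicit Defensive.

Section VC.
Variables (n m : nat) (F : 'I_m -> {set 'I_n}).

Definition shattered (S : {set 'I_n}) : Prop :=
  forall A : {set 'I_n}, A \subset S -> exists k : 'I_m, F k :&: S = A.

Definition vc_dim_le (d : nat) : Prop :=
  forall S : {set 'I_n}, #|S| = d.+1 -> ~ shattered S.

Definition admissible (i : 'I_m) (B : {set 'I_n}) : Prop :=
  B \proper F i /\ forall k : 'I_m, F k :&: F i <> B.

Definition edges_G (J : {set 'I_n}) : {set {set 'I_n}} :=
  [set F k :\: J | k in [pred k : 'I_m | #|F k :&: J| == 1]].

Definition T1 (B : 'I_m -> {set 'I_n}) (d : nat) (J : {set 'I_n}) : {set {set 'I_n}} :=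
  [set F k | k in [pred k : 'I_m | (F k \subset ~: J) && (B k \subset ~: J)
                                    && (#|B k| == d.-1)]].
End VC.

From mathcomp Require Import all_boot zify.
From Stdlib Require Import Reals Lra.
Set Implicit Arguments. Unset Strict Implicit. Unset Printing Implicit Defensive.

(* Let [k] be in [T_J^1].  For every [x] outside [J] and [F_k], the [d]-set
   [x ∪ B_k] avoids [J] but is not an edge of [G_J]: an edge [F_j \ J] equal
   to it would give [F_j ∩ F_k = B_k].  This yields [|~J| - (d+1) >= n/2]
   non-edges above [B_k].  Conversely a [d]-set contains at most
   [d 2^(3(d+1))] sets [B_k] of size [d-1]: if [B_i = B_0] then, by
   maximality of [B_i], two [d]-subsets of [F_i] are traces [F_f ∩ F_i],
   [F_g ∩ F_i], and every [F_j] with [B_j = B_0] lies in [F_i ∪ F_f ∪ F_g].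
   Double counting against the at most [Kn] non-edges gives the bound. *)

Lemma card_bigcup_le (I T : finType) (P : pred I) (S : I -> {set T}) :
  (#|\bigcup_(i | P i) S i| <= \sum_(i | P i) #|S i|)%N.
Proof.
elim/big_rec2: _ => [|i X s _ le_X_s]; first by rewrite cards0.
by rewrite (leq_trans (leq_card_setU _ _)) ?leq_add2l.
Qed.

Lemma card_subset_family_le (I T : finType) (F : I -> {set T}) (U : {set T}) :
  injective F -> (#|[set k | F k \subset U]| <= expn 2 #|U|)%N.
Proof.
move=> F_inj; rewrite -card_powerset -(card_imset _ F_inj).
by apply: subset_leq_card; apply/subsetP => X /imsetP[k]; rewrite !inE => kU ->.
Qed.

Lemma double_counting (T U : finType) (A : {set T}) (M : {set U}) (R : T -> U -> bool) a b :
  {in A, forall i, a <= #|[set D in M | R i D]|}%N ->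
  {in M, forall D, #|[set i in A | R i D]| <= b}%N ->
  (#|A| * a <= #|M| * b)%N.
Proof.
have cardE (V : finType) (X : {set V}) (P : pred V) :
    #|[set x in X | P x]| = (\sum_(x in X) P x)%N.
  by rewrite -sum1dep_card big_mkcondr; apply: eq_bigr => x _; case: (P x).
move=> geA leM; rewrite -!sum_nat_const.
apply: (@leq_trans (\sum_(i in A) \sum_(D in M) R i D)).
  by apply: leq_sum => i iA; rewrite -cardE geA.
by rewrite exchange_big; apply: leq_sum => D DM; rewrite -cardE leM.
Qed.

Section MaximalAdmissible.
Variables (n m : nat) (F B : 'I_m -> {set 'I_n}) (d : nat).
Hypothesis d_gt0 : (0 < d)%N.
Hypothesis F_inj : injective F.
Hypothesis card_F : forall i, #|F i| = d.+1.
Hypothesis B_adm : forall i, admissible F i (B i).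
Hypothesis B_max : forall i B', admissible F i B' -> (#|B'| <= #|B i|)%N.

Lemma B_sub i : B i \subset F i.
Proof. exact: proper_sub (B_adm i).1. Qed.

Lemma trace_of_proper_gt i (A : {set 'I_n}) :
  A \proper F i -> (#|B i| < #|A|)%N -> exists k, F k :&: F i = A.
Proof.
move=> AF ltBA; case: (pickP [pred k | F k :&: F i == A]) => [k /eqP | noTr].
  by exists k.
have : admissible F i A by split=> // k trA; move: (noTr k); rewrite /= trA eqxx.
by move/B_max; rewrite leqNgt ltBA.
Qed.

Lemma exists_trace_notin_B j k :
  B j \subset F k -> exists2 z, z \in F k :&: F j & z \notin B j.
Proof.
move=> BF; suff /properP[] : B j \proper F k :&: F j by [].
rewrite properEneq subsetI BF B_sub eq_sym !andbT.
by apply/eqP; exact: (B_adm j).2 k.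
Qed.

Lemma card_F_diff_B j : #|B j| = d.-1 -> #|F j :\: B j| = 2.
Proof. by rewrite cardsD (setIidPr (B_sub j)) card_F => ->; lia. Qed.

(* [F j :\: B j] has only two points; it meets each of [F i], [F f], [F g],
   and no point of [F i :\: B i] lies in both [F f] and [F g]. *)
Lemma fiber_B_sub_union i f g a :
  #|B i| = d.-1 -> a \in F i :\: B i ->
  F f :&: F i = a |: B i -> F g :&: F i = F i :\ a ->
  forall j, B j = B i -> F j \subset F i :|: F f :|: F g.
Proof.
move=> cardB /setDP[aF aB] trf trg j Bj; set U := F i :|: F f :|: F g.
have B_f : B j \subset F f.
  by rewrite Bj; apply: subset_trans (subsetIl _ (F i)); rewrite trf subsetUr.
have B_g : B j \subset F g.
  rewrite Bj; apply: subset_trans (subsetIl _ (F i)); rewrite trg subsetD1 B_sub.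
  exact: aB.
have B_i : B j \subset F i by rewrite Bj B_sub.
have [z1 /setIP[z1i z1j] z1B] := exists_trace_notin_B B_i.
have [z2 /setIP[z2f z2j] z2B] := exists_trace_notin_B B_f.
have [z3 /setIP[z3g z3j] z3B] := exists_trace_notin_B B_g.
have z1_notin_fg : (z1 \notin F f) || (z1 \notin F g).
  rewrite -negb_and; apply/andP => -[z1f z1g].
  have : z1 \in a |: B i by rewrite -trf inE z1f z1i.
  rewrite in_setU1 -Bj (negbTE z1B) orbF => /eqP z1a.
  have : z1 \in F i :\ a by rewrite -trg inE z1g z1i.
  by rewrite z1a setD11.
have [z [zj zB zU z1z]] : exists z, [/\ z \in F j, z \notin B j, z \in U & z != z1].
  case/orP: z1_notin_fg => z1n; [exists z2 | exists z3];
    (split=> //; first by rewrite !inE ?z2f ?z3g ?orbT);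
    by apply: (contraNneq _ z1n) => <-.
apply/subsetP => y yj; apply/negPn/negP => yU.
have yB : y \notin B j by apply: contra yU => /(subsetP B_i) yi; rewrite !inE yi.
suff : (2 < #|F j :\: B j|)%N by rewrite card_F_diff_B // Bj.
apply/card_gt2P; exists y, z1, z; split; first by rewrite !inE yj zj z1j yB zB z1B.
split.
- by apply: contraNneq yU => ->; rewrite !inE z1i.
- by rewrite eq_sym.
- by apply: contraNneq yU => <-.
Qed.

Lemma card_fiber_B_le (B0 : {set 'I_n}) :
  #|B0| = d.-1 -> (#|[set k | B k == B0]| <= expn 2 (3 * d.+1))%N.
Proof.
case: (set_0Vmem [set k | B k == B0]) => [-> | [i]]; first by rewrite cards0.
rewrite inE => /eqP <- cardB.
have /card_gt0P[a aFB] : (0 < #|F i :\: B i|)%N by rewrite card_F_diff_B.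
have /setDP[aF aB] := aFB.
have [f trf] : exists f, F f :&: F i = a |: B i.
  apply: trace_of_proper_gt; last by rewrite cardsU1 aB.
  by rewrite properEcard subUset sub1set aF B_sub cardsU1 aB cardB card_F; lia.
have [g trg] : exists g, F g :&: F i = F i :\ a.
  apply: trace_of_proper_gt; first exact: properD1.
  by have := cardsD1 a (F i); rewrite aF card_F cardB; lia.
set U := F i :|: F f :|: F g.
have cardU : (#|U| <= 3 * d.+1)%N.
  have := cardsU (F i :|: F f) (F g); have := cardsU (F i) (F f).
  by rewrite /U !card_F; lia.
apply: leq_trans (leq_pexp2l _ cardU) => //.
apply: leq_trans (card_subset_family_le U F_inj).
apply/subset_leq_card/subsetP => j; rewrite !inE => /eqP Bj.
exact: fiber_B_sub_union aFB trf trg j Bj.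
Qed.

Lemma card_B_sub_le (D : {set 'I_n}) :
  #|D| = d ->
  (#|[set k | (#|B k| == d.-1) && (B k \subset D)]| <= d * expn 2 (3 * d.+1))%N.
Proof.
move=> cardD.
apply: (@leq_trans #|\bigcup_(x in D) [set k | B k == D :\ x]|).
  apply/subset_leq_card/subsetP => k; rewrite inE => /andP[/eqP cardB BD].
  have [x xD xB] : exists2 x, x \in D & x \notin B k.
    by apply/subsetPn/negP => /subset_leq_card; rewrite cardD cardB; lia.
  apply/bigcupP; exists x => //; rewrite inE eqEcard subsetD1 BD xB /=.
  by rewrite -(leq_add2l (x \in D)) -cardsD1 xD cardD cardB; lia.
apply: leq_trans (card_bigcup_le _ _) _.
rewrite -{1}cardD -sum_nat_const; apply: leq_sum => x xD.
by apply: card_fiber_B_le; have := cardsD1 x D; rewrite xD cardD; lia.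
Qed.

Definition T1_index J : {set 'I_m} :=
  [set k | (F k \subset ~: J) && (B k \subset ~: J) && (#|B k| == d.-1)].

Definition nonedges_G J : {set {set 'I_n}} :=
  [set D : {set 'I_n} | (D \subset ~: J) && (#|D| == d) && (D \notin edges_G F J)].

Lemma card_T1_le J : (#|T1 F B d J| <= #|T1_index J|)%N.
Proof.
apply: leq_trans (leq_imset_card _ _) _.
by apply/subset_leq_card/subsetP => k; rewrite !inE.
Qed.

Lemma add_nonedge_G J k x :
  k \in T1_index J -> x \in ~: J :\: F k -> x |: B k \in nonedges_G J.
Proof.
rewrite inE => /andP[/andP[FJ BJ] /eqP cardB] /setDP[xJ xF].
have xB : x \notin B k by apply: contra xF => /(subsetP (B_sub k)).
rewrite inE subUset sub1set xJ BJ cardsU1 xB cardB /=.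
apply/andP; split; first by apply/eqP; lia.
apply/negP => /imsetP[j _ trj]; apply: ((B_adm k).2 j); apply/setP => y.
rewrite inE; case yk: (y \in F k); last first.
  by rewrite andbF; apply/esym/negbTE/negP => /(subsetP (B_sub k)); rewrite yk.
have yJ : y \in ~: J := subsetP FJ y yk.
have -> : (y \in F j) = (y \in x |: B k) by rewrite trj in_setD -in_setC yJ.
by rewrite andbT in_setU1; case: eqP => // yx; move: xF; rewrite -yx yk.
Qed.

Lemma card_T1_index_mul_le J :
  (#|T1_index J| * (#|~: J| - d.+1) <= #|nonedges_G J| * (d * expn 2 (3 * d.+1)))%N.
Proof.
apply: (@double_counting _ _ (T1_index J) (nonedges_G J) (fun k D => B k \subset D))
  => [k kT | D].
  have FJ : F k \subset ~: J by move: kT; rewrite inE => /andP[/andP[]].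
  have -> : (#|~: J| - d.+1 = #|~: J :\: F k|)%N by rewrite cardsD (setIidPr FJ) card_F.
  rewrite -(@card_in_imset _ _ (fun x => x |: B k)); last first.
    move=> x y /setDP[_ xF] _ eq_xy; have : x \in y |: B k by rewrite -eq_xy setU11.
    by rewrite in_setU1 => /orP[/eqP // | /(subsetP (B_sub k)) xFk]; rewrite xFk in xF.
  apply/subset_leq_card/subsetP => _ /imsetP[x xJF ->].
  by rewrite inE add_nonedge_G // subsetUr.
rewrite inE => /andP[/andP[_ /eqP cardD] _].
apply: leq_trans (card_B_sub_le cardD); apply/subset_leq_card/subsetP => k.
by rewrite !inE => /andP[/andP[_ ->] ->].
Qed.

Lemma edges_G_sub_draws J :
  edges_G F J \subset [set D : {set 'I_n} | D \subset ~: J & #|D| == d].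
Proof.
apply/subsetP => _ /imsetP[k /eqP cardFJ ->]; rewrite inE; apply/andP; split.
  by apply/subsetP => x; rewrite !inE => /andP[].
by rewrite cardsD cardFJ card_F subn1.
Qed.

Lemma card_nonedges_G J : (#|nonedges_G J| + #|edges_G F J| = 'C(#|~: J|, d))%N.
Proof.
rewrite -cards_draws -[RHS](cardsID (edges_G F J)) (setIidPr (edges_G_sub_draws J)) addnC.
by congr (_ + _); apply: eq_card => D; rewrite !inE andbC.
Qed.

End MaximalAdmissible.

Lemma le_INR_of_mul_le (a N M c n : nat) (K : R) :
  (a * N <= M * c)%N -> (INR M <= K * INR n)%R -> (n <= 2 * N)%N -> (0 < N)%N ->
  (0 <= K)%R -> (INR a <= 2 * INR c * K)%R.
Proof.
move=> /leP/le_INR aN Mn /leP/le_INR nN /ltP/lt_0_INR N_gt0 K_ge0.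
rewrite -!multE !mult_INR /= in aN nN.
have Mc := Rmult_le_compat_r _ _ _ (pos_INR c) Mn.
have nc := Rmult_le_compat_l _ _ _ (Rmult_le_pos _ _ K_ge0 (pos_INR c)) nN.
apply: (Rmult_le_reg_r (INR N)) => //; lra.
Qed.

Theorem claim3p8 :
  forall d : nat, (2 <= d)%N ->
  exists (C : R) (n0 : nat), (0 < C)%R /\
  forall (n m : nat) (F : 'I_m -> {set 'I_n}) (B : 'I_m -> {set 'I_n})
         (J : {set 'I_n}) (K : R),
    (n0 <= n)%N ->
    injective F ->
    (forall i : 'I_m, #|F i| = d.+1) ->
    vc_dim_le F d ->
    (forall i : 'I_m, admissible F i (B i)) ->
    (forall (i : 'I_m) (B' : {set 'I_n}), admissible F i B' -> (#|B'| <= #|B i|)%N) ->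
    (4 * #|J| <= n)%N ->
    (0 <= K)%R ->
    (INR 'C(n - #|J|, d) - K * INR n <= INR #|edges_G F J|)%R ->
    (INR #|T1 F B d J| <= C * K)%R.
Proof.
move=> d d_ge2; have d_gt0 : (0 < d)%N by apply: leq_trans d_ge2.
exists (2 * INR (d * expn 2 (3 * d.+1)))%R, (4 * d.+1)%N; split.
  by apply: Rmult_lt_0_compat; [lra | apply/lt_0_INR/ltP; rewrite muln_gt0 d_gt0 expn_gt0].
move=> n m F B J K n_ge F_inj card_F _ B_adm B_max J_le K_ge0 edges_ge.
have cardCJ : #|~: J| = (n - #|J|)%N by rewrite cardsCs setCK card_ord.
have nonedges_le : (INR #|nonedges_G F d J| <= K * INR n)%R.
  have := card_nonedges_G card_F J; rewrite cardCJ => /(congr1 INR).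
  by rewrite -plusE plus_INR; lra.
apply: Rle_trans (le_INR _ _ (leP (card_T1_le F B d J))) _.
have count := card_T1_index_mul_le d_gt0 F_inj card_F B_adm B_max J.
by apply: le_INR_of_mul_le count nonedges_le _ _ K_ge0; rewrite cardCJ; lia.
Qed.
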